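(* Let $a\geq 3$ and $m\geq 2a^2-a+2$ be integers. Every 2-coloring of $[C(m,a)]$ (with colors red and blue) in which both $a-2$ and $a-1$ are red admits a monochromatic solution of $L(m,a)$ in $[C(m,a)]$.
   Context: For integers $m\geq 3$, $a\geq 1$, $L(m,a)$ denotes the equation $x_1+x_2+\cdots+x_{m-1}=a x_m$. For a positive integer $n$, $[n]=\{1,\dots,n\}$. A solution of $L(m,a)$ in $[n]$ is an $m$-tuple $(x_1,\dots,x_m)\in[n]^m$ (entries not necessarily distinct) satisfying the equation; given a 2-coloring of $[n]$, it is monochromatic if all $x_i$ have the same color. $C(m,a)$ denotes $\left\lceil \frac{m-1}{a}\left\lceil \frac{m-1}{a}\right\rceil\right\rceil$. *)

From mathcomp Require Import all_boot.
Unset Printing Implicit Defensive.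

Definition ceil_div (p d : nat) : nat := (p + d.-1) %/ d.

Definition Cma (m a : nat) : nat := ceil_div ((m - 1) * ceil_div (m - 1) a) a.

(* x : 'I_m -> nat is a solution of L(m,a) in [n]:
   x_1 + ... + x_{m-1} = a * x_m  (indices shifted to 0..m-1), all entries in [1,n] *)
Definition is_solution (m a n : nat) (x : 'I_m -> nat) : Prop :=
  (forall i, 1 <= x i <= n) /\
  \sum_(i < m | (i : nat) < m - 1) x i = a * (\sum_(i < m | (i : nat) == m - 1) x i).

(* a 2-coloring is a function col : nat -> bool (true = red, false = blue);
   only its values on [n] matter. *)
Definition monochromatic (m : nat) (col : nat -> bool) (x : 'I_m -> nat) : Prop :=
  forall i j, col (x i) = col (x j).

From mathcomp Require Import all_boot zify.
From Stdlib Require Import Classical.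

(* Let k = m - 1 be the number of left-hand terms of L(m,a), c = ceil(k/a)
   and n = ceil(k c / a) = C(m,a).  A monochromatic solution is the same as
   a sequence of k values in [1,n] summing to a*t, all coloured like t.
   Assume, for a contradiction, that a colouring of [n] with a-2 and a-1 red
   has no such solution.  Two constructions produce solutions: filling an
   interval [lo,hi] coloured like t (possibly after i copies of t itself),
   and taking p copies of u and q copies of w.  With them we show, in turn:
   (1) the whole range [a-2, c-1] is red, by induction on its elements;
   (2) the values 1..a-3 are red, so [1, c-1] is red;
   (3) c, c+1 and n are blue;
   (4) (k-r) copies of c and r copies of c+1, with r = n a - k c < a,
   then sum to a*n: a blue solution, the final contradiction. *)

Lemma ceil_div_bounds p d : 0 < d -> p <= ceil_div p d * d <= p + d - 1.
Proof.
move=> d_gt0; rewrite /ceil_div.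
have := divn_eq (p + d.-1) d; have := ltn_pmod (p + d.-1) d_gt0; lia.
Qed.

Lemma mul_pred_pred k c : 0 < k -> 0 < c -> (k - 1) * (c - 1) + (k + c) = k * c + 1.
Proof. by case: k c => [|k] [|c] //= _ _; rewrite !subSS !subn0 mulSnr mulnSr; lia. Qed.

(* Numerical facts for a >= 3 and k >= 2a^2 - a + 1 (stated without
   subtraction): they check that the terms chosen in steps (1)-(3) fall into
   the required intervals.  Shifting a and k past their least values removes
   the truncated subtractions, after which nia finds the certificates. *)
Section Bounds.
Variables (a k : nat).
Hypothesis a_ge3 : 3 <= a.
Hypothesis k_large : 2 * (a * a) + 1 <= k + a.

(* Used for z <= k+a-3 in step (1). *)
Lemma run_value_bound : (a - 2) * (k + a - 3) <= (k - 2) * (a - 1).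
Proof.
have [p Ea] : exists p, a = p + 3 by exists (a - 3); lia.
have [q Ek] : exists q, k = q + 2 by exists (k - 2); nia.
subst a k; nia.
Qed.

(* Used for y = ((k-1) v + z)/a in step (1). *)
Lemma run_target_bound v : a <= v ->
  (a - 2) * ((k - 1) * v + (k + a - 3)) <= a * ((k - 2) * (v - 1)).
Proof.
move=> a_le_v.
have [p Ea] : exists p, a = p + 3 by exists (a - 3); lia.
have [q Ek] : exists q, k = q + 2 by exists (k - 2); nia.
have [w ->] : exists w, v = w + a by exists (v - a); lia.
subst a k.
have -> : p + 3 - 2 = p + 1 by lia.
have -> : q + 2 - 1 = q + 1 by lia.
have -> : q + 2 - 2 = q by lia.
have -> : q + 2 + (p + 3) - 3 = q + p + 2 by lia.
have -> : w + (p + 3) - 1 = w + p + 2 by lia.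
nia.
Qed.

(* Used for y = k-a+b in step (2). *)
Lemma low_target_bound b : 1 <= b -> k * (a - 2) <= a * (k - a + b).
Proof.
move=> b_ge1.
have [p Ea] : exists p, a = p + 3 by exists (a - 3); lia.
have [q Ek] : exists q, k = q + a by exists (k - a); nia.
subst k a; nia.
Qed.

(* Used for n in step (3). *)
Lemma top_target_bound c : 2 * a <= c -> c * a <= k + a - 1 ->
  (a - 1) * (k * c + a - 1) <= a * ((k - 1) * (c - 1)).
Proof.
move=> c_ge c_ceil.
have [p Ea] : exists p, a = p + 3 by exists (a - 3); lia.
have [q Ek] : exists q, k = q + 1 by exists (k - 1); nia.
have [r Ec] : exists r, c = r + 1 by exists (c - 1); nia.
subst a k c.
have -> : p + 3 - 1 = p + 2 by lia.
have -> : q + 1 - 1 = q by lia.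
have -> : r + 1 - 1 = r by lia.
have -> : (q + 1) * (r + 1) + (p + 3) - 1 = (q + 1) * (r + 1) + (p + 2) by lia.
have r_ge : 2 * p + 5 <= r by lia.
have q_ge : (p + 3) * r <= q by nia.
nia.
Qed.
End Bounds.

Definition mono_rep (a k n : nat) (col : nat -> bool) (s : seq nat) (t : nat) :=
  [/\ size s = k, 1 <= t <= n, sumn s = a * t &
      forall x, x \in s -> 1 <= x <= n /\ col x = col t].

Lemma solution_of_rep m a n col s t : 0 < m -> mono_rep a (m - 1) n col s t ->
  exists x : 'I_m -> nat, is_solution m a n x /\ monochromatic m col x.
Proof.
case: m => [|k] // _ [size_s t_range sum_s s_ok].
rewrite subn1 /= in size_s.
pose x (i : 'I_k.+1) := if (i : nat) < k then nth 0 s i else t.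
have x_ok i : 1 <= x i <= n /\ col (x i) = col t.
  rewrite /x; case: ifP => [i_lt | _]; last by [].
  by apply: s_ok; rewrite mem_nth // size_s.
exists x; split; last by move=> i j; rewrite (proj2 (x_ok i)) (proj2 (x_ok j)).
split; first by move=> i; case: (x_ok i).
rewrite subn1 /= big_mkcond big_ord_recr /= ltnn addn0.
rewrite [in RHS]big_mkcond big_ord_recr /= eqxx /x ltnn.
rewrite [X in _ = a * (X + _)]big1 ?add0n; last first.
  by move=> i _; rewrite /= (ltn_eqF (ltn_ord i)).
rewrite -sum_s sumnE (big_nth 0) big_mkord size_s.
by apply: eq_bigr => i _; rewrite /= ltn_ord.
Qed.

Lemma interval_sum N lo hi S : lo <= hi -> N * lo <= S <= N * hi ->
  exists s : seq nat, [/\ size s = N, sumn s = S & forall x, x \in s -> lo <= x <= hi].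
Proof.
move=> lo_le_hi; elim: N S => [|N IH] S S_range.
  by rewrite !mul0n in S_range; exists [::]; split => //=; lia.
pose x := minn hi (S - N * lo).
rewrite !mulSn in S_range.
have [s [size_s sum_s s_in]] : exists s : seq nat,
    [/\ size s = N, sumn s = S - x & forall x, x \in s -> lo <= x <= hi].
  by apply: IH; have := leq_mul (leqnn N) lo_le_hi; lia.
exists (x :: s); split; [by rewrite /= size_s | rewrite /= sum_s; lia |].
by move=> y; rewrite inE => /orP [/eqP -> | /s_in]; lia.
Qed.

Lemma interval_rep a k n col lo hi i t :
  1 <= lo <= hi -> hi <= n -> 1 <= t <= n -> i <= k -> i <= a ->
  (forall x, lo <= x <= hi -> col x = col t) ->
  (k - i) * lo <= (a - i) * t <= (k - i) * hi ->
  exists s, mono_rep a k n col s t.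
Proof.
move=> lo_range hi_le t_range i_le i_le_a col_lohi S_range.
have [s [size_s sum_s s_in]] := interval_sum (k - i) lo hi ((a - i) * t)
  ltac:(lia) S_range.
exists (nseq i t ++ s); split.
- by rewrite size_cat size_nseq size_s subnKC.
- exact: t_range.
- by rewrite sumn_cat sumn_nseq sum_s mulnC -mulnDl subnKC.
- move=> x; rewrite mem_cat mem_nseq => /orP [/andP [_ /eqP ->] // | /s_in x_in].
  by split; [lia | apply: col_lohi].
Qed.

Lemma two_value_rep a k n col p q u w t :
  p + q = k -> p * u + q * w = a * t ->
  1 <= u <= n -> 1 <= w <= n -> 1 <= t <= n -> col u = col t -> col w = col t ->
  mono_rep a k n col (nseq p u ++ nseq q w) t.
Proof.
move=> size_pq sum_pq u_range w_range t_range col_u col_w; split => //.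
- by rewrite size_cat !size_nseq.
- by rewrite sumn_cat !sumn_nseq; lia.
- by move=> x; rewrite mem_cat !mem_nseq => /orP [] /andP [_ /eqP ->].
Qed.

Section ForcedColours.
Variables (a k c n : nat) (col : nat -> bool).
Hypothesis a_ge3 : 3 <= a.
Hypothesis k_large : 2 * (a * a) + 1 <= k + a.
Hypothesis c_ceil : k <= c * a <= k + a - 1.
Hypothesis n_ceil : k * c <= n * a <= k * c + a - 1.
Hypothesis red_a2 : col (a - 2).
Hypothesis red_a1 : col (a - 1).
Hypothesis no_rep : forall s t, ~ mono_rep a k n col s t.

Lemma a_gt0 : 0 < a.
Proof. exact: leq_trans a_ge3. Qed.

Lemma size_facts : [/\ a < k, 2 * a <= c, c < k & 2 * k <= n].
Proof.
have c_ge : 2 * a <= c by nia.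
by split => //; nia.
Qed.

Lemma blue_of_red_interval lo hi i t :
  (forall x, lo <= x <= hi -> col x) ->
  (k - i) * lo <= (a - i) * t <= (k - i) * hi ->
  1 <= lo <= hi -> hi <= n -> 1 <= t <= n -> i <= a -> ~~ col t.
Proof.
move=> red_lohi S_range lo_range hi_le t_range i_le; apply/negP => red_t.
have [s rep_s] : exists s, mono_rep a k n col s t.
  apply: (@interval_rep a k n col lo hi i t) => //; first nia.
  by move=> x /red_lohi; rewrite red_t.
exact: no_rep rep_s.
Qed.

(* The terms used in step (1): for a <= v < c, the multiple y a of a just
   above (k-1) v + (k-2) exceeds (k-1) v by some z in [k-2, k+a-3], and y
   is a valid value in [k-1, n]. *)
Lemma run_witness v : a <= v <= c - 1 -> exists y z,
  [/\ (k - 1) * v + z = y * a, k - 2 <= z <= k + a - 3 & k - 1 <= y <= n].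
Proof.
move=> v_range; have [a_lt_k c_ge c_lt_k n_ge] := size_facts.
have := ceil_div_bounds ((k - 1) * v + (k - 2)) a a_gt0.
set y := ceil_div _ a => y_ceil.
set z := y * a - (k - 1) * v.
have y_eq : (k - 1) * v + z = y * a by rewrite /z; lia.
have z_range : k - 2 <= z <= k + a - 3 by rewrite /z; lia.
exists y, z; split => //; apply/andP; split; rewrite -(leq_pmul2r a_gt0).
  apply: leq_trans (_ : (k - 1) * v <= _); first by rewrite leq_mul2l; lia.
  by rewrite -y_eq leq_addr.
apply: leq_trans (_ : (k - 1) * (c - 1) + (k + a - 3) <= _).
  by rewrite -y_eq; apply: leq_add; [rewrite leq_mul2l; lia | lia].
(* (k-1)(c-1) + k + a - 3 <= k c, a linear fact once the products are named *)
move: (mul_pred_pred k c ltac:(lia) ltac:(lia)) (proj1 (andP n_ceil)).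
move: ((k - 1) * (c - 1)) (k * c) => P Q.
lia.
Qed.

(* Otherwise
   take y, z as in run_witness: both are blue (a y and a z are sums of 2
   copies of themselves and k-2 elements of [a-2, v-1]), and k-1 copies of v
   plus z form a blue solution. *)
Lemma red_step v : a <= v <= c - 1 ->
  (forall x, a - 2 <= x < v -> col x) -> col v.
Proof.
move=> v_range red_run; apply/negPn/negP => blue_v.
have [a_lt_k c_ge c_lt_k n_ge] := size_facts.
have [y [z [y_eq z_range y_range]]] := run_witness v v_range.
have red_prefix_v x : a - 2 <= x <= v - 1 -> col x.
  by move=> x_range; apply: red_run; lia.
have blue_z : ~~ col z.
  have S_z : (k - 2) * (a - 2) <= (a - 2) * z <= (k - 2) * (v - 1).
    apply/andP; split; first by rewrite mulnC leq_mul; lia.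
    apply: leq_trans (_ : _ <= (a - 2) * (k + a - 3)) _.
      by rewrite leq_mul2l; lia.
    apply: leq_trans (run_value_bound a k a_ge3 k_large) _.
    by rewrite leq_mul2l; lia.
  by apply: (@blue_of_red_interval (a - 2) (v - 1) 2 z red_prefix_v S_z); lia.
have blue_y : ~~ col y.
  have S_y : (k - 2) * (a - 2) <= (a - 2) * y <= (k - 2) * (v - 1).
    apply/andP; split; first by rewrite mulnC leq_mul; lia.
    rewrite -(leq_pmul2l a_gt0).
    have -> : a * ((a - 2) * y) = (a - 2) * (y * a) by rewrite mulnCA (mulnC a).
    rewrite -y_eq.
    apply: leq_trans _ (run_target_bound a k a_ge3 k_large v (proj1 (andP v_range))).
    by rewrite leq_mul2l leq_add2l; lia.
  by apply: (@blue_of_red_interval (a - 2) (v - 1) 2 y red_prefix_v S_y); lia.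
have col_v : col v = col y by rewrite (negbTE blue_v) (negbTE blue_y).
have col_z : col z = col y by rewrite (negbTE blue_z) (negbTE blue_y).
apply: (no_rep _ _ (@two_value_rep a k n col (k - 1) 1 v z y _ _ _ _ _ col_v col_z)).
- lia.
- by rewrite mul1n y_eq mulnC.
- lia.
- lia.
- lia.
Qed.

Lemma red_middle x : a - 2 <= x <= c - 1 -> col x.
Proof.
elim/ltn_ind: x => x IH x_range.
have [x_le | x_gt] := leqP x (a - 1).
  by have [-> | ->] : x = a - 2 \/ x = a - 1 by lia.
by apply: red_step => [|y y_range]; [lia | apply: IH; lia].
Qed.

(* Step (2): a blue b <= a-3 forces y = k-a+b to be blue (a y is a sum of k
   elements of the red interval [a-2, c-1]), and then a-b copies of y plus y
   copies of b are a blue solution. *)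
Lemma red_low b : 1 <= b <= a - 3 -> col b.
Proof.
move=> b_range; apply/negPn/negP => blue_b.
have [a_lt_k c_ge c_lt_k n_ge] := size_facts.
set y := k - a + b.
have blue_y : ~~ col y.
  have S_y : (k - 0) * (a - 2) <= (a - 0) * y <= (k - 0) * (c - 1).
    rewrite !subn0; apply/andP; split.
      by apply: low_target_bound; lia.
    apply: leq_trans (_ : a * k <= _); first by rewrite leq_mul2l; lia.
    by rewrite mulnC leq_mul2l; lia.
  by apply: (@blue_of_red_interval (a - 2) (c - 1) 0 y red_middle S_y); lia.
have col_b : col b = col y by rewrite (negbTE blue_b) (negbTE blue_y).
apply: (no_rep _ _ (@two_value_rep a k n col (a - b) y y b y _ _ _ _ _ erefl col_b)).
- lia.
- by rewrite (mulnC y b) -mulnDl subnK //; lia.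
- lia.
- lia.
- lia.
Qed.

Lemma red_prefix x : 1 <= x <= c - 1 -> col x.
Proof.
move=> x_range; have [x_le | x_gt] := leqP x (a - 3).
  by apply: red_low; lia.
by apply: red_middle; lia.
Qed.

(* Step (3): c and c+1 are blue, as a*c and a*(c+1) are sums of k elements
   of [1, c-1]. *)
Lemma blue_near_c t : c <= t <= c.+1 -> ~~ col t.
Proof.
move=> t_range.
have [a_lt_k c_ge c_lt_k n_ge] := size_facts.
have S_t : (k - 0) * 1 <= (a - 0) * t <= (k - 0) * (c - 1).
  rewrite !subn0 muln1; apply/andP; split; first nia.
  have : 2 * k <= k * (c - 1) by rewrite mulnC leq_mul2l; lia.
  nia.
by apply: (@blue_of_red_interval 1 (c - 1) 0 t red_prefix S_t); lia.
Qed.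

(* Step (3): n is blue, as (a-1) n is a sum of k-1 elements of [1, c-1]. *)
Lemma blue_n : ~~ col n.
Proof.
have [a_lt_k c_ge c_lt_k n_ge] := size_facts.
have S_n : (k - 1) * 1 <= (a - 1) * n <= (k - 1) * (c - 1).
  rewrite muln1; apply/andP; split.
    by apply: leq_trans (_ : n <= _); [lia | rewrite leq_pmull; lia].
  rewrite -(leq_pmul2l a_gt0); apply: leq_trans (top_target_bound a k a_ge3 k_large c _ _).
    by rewrite mulnCA leq_mul2l; lia.
  - lia.
  - lia.
by apply: (@blue_of_red_interval 1 (c - 1) 1 n red_prefix S_n); lia.
Qed.

(* Step (4): with r = n a - k c < a, (k-r) copies of c and r copies of c+1
   sum to a n, a blue solution. *)
Lemma forced_colours_absurd : False.
Proof.
have [a_lt_k c_ge c_lt_k n_ge] := size_facts.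
have col_c : col c = col n.
  by rewrite (negbTE blue_n) (negbTE (blue_near_c c _)) // leqnn leqnSn.
have col_c1 : col c.+1 = col n.
  by rewrite (negbTE blue_n) (negbTE (blue_near_c c.+1 _)) // leqnSn leqnn.
set r := n * a - k * c.
have r_eq : k * c + r = n * a by rewrite /r; lia.
have r_lt : r < a by rewrite /r; lia.
clearbody r.
apply: (no_rep _ _ (@two_value_rep a k n col (k - r) r c c.+1 n _ _ _ _ _ col_c col_c1)).
- lia.
- have rc_le : r * c <= k * c by rewrite leq_mul2r; lia.
  by rewrite mulnS mulnBl; lia.
- lia.
- lia.
- lia.
Qed.
End ForcedColours.

Lemma forced_rep a k (col : nat -> bool) : 3 <= a -> 2 * (a * a) + 1 <= k + a ->
  col (a - 2) -> col (a - 1) ->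
  exists s t, mono_rep a k (ceil_div (k * ceil_div k a) a) col s t.
Proof.
move=> a_ge3 k_large red_a2 red_a1; apply: NNPP => no_rep.
have a_gt0 : 0 < a by apply: leq_trans a_ge3.
apply: (@forced_colours_absurd a k (ceil_div k a) _ col a_ge3 k_large
  (ceil_div_bounds k a a_gt0) (ceil_div_bounds _ a a_gt0) red_a2 red_a1).
by move=> s t rep_s; apply: no_rep; exists s, t.
Qed.

Theorem proposition3 (a m : nat) (col : nat -> bool) :
  3 <= a -> 2 * a ^ 2 - a + 2 <= m ->
  col (a - 2) = true -> col (a - 1) = true ->
  exists x : 'I_m -> nat,
    is_solution m a (Cma m a) x /\ monochromatic m col x.
Proof.
move=> a_ge3 m_large red_a2 red_a1.
have k_large : 2 * (a * a) + 1 <= (m - 1) + a.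
  by rewrite mulnn; lia.
have [s [t rep_s]] := forced_rep a (m - 1) col a_ge3 k_large red_a2 red_a1.
by apply: (solution_of_rep m a _ col s t _ rep_s); lia.
Qed.
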